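(* Let $X$ be a metric space, let $A\subseteq X$ be nonempty and let $Y$ be a complete $\mathbb{R}$-tree. Then the multivalued mapping $\Phi:\mathcal{N}(A,Y)\to\mathcal{P}(\mathcal{N}(X,Y))$, assigning to each $f\in\mathcal{N}(A,Y)$ the set of all $f'\in\mathcal{N}(X,Y)$ with $f'|_A=f$, admits a nonexpansive selection, i.e. there is a map $\alpha:\mathcal{N}(A,Y)\to\mathcal{N}(X,Y)$ with $\alpha(f)\in\Phi(f)$ for all $f$ and $d_\infty(\alpha(f),\alpha(g))\le d_\infty(f,g)$.
   Context: An $\mathbb{R}$-tree is a uniquely geodesic metric space such that whenever two geodesic segments intersect only in a common endpoint, their union is a geodesic segment. $\mathcal{N}(A,Y)$ is the set of bounded nonexpansive maps $A\to Y$ with the supremum metric $d_\infty$. *)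

From Stdlib Require Import Reals.
From Coquelicot Require Import Coquelicot.
Open Scope R_scope.

Record metric (T : Type) (d : T -> T -> R) : Prop := {
  metric_eq0 : forall x y, d x y = 0 <-> x = y;
  metric_sym : forall x y, d x y = d y x;
  metric_tri : forall x y z, d x z <= d x y + d y z
}.

Definition geodesic_segment {T : Type} (d : T -> T -> R) (x y : T)
  (S : T -> Prop) : Prop :=
  exists c : R -> T,
    (forall s t, 0 <= s <= d x y -> 0 <= t <= d x y ->
        d (c s) (c t) = Rabs (s - t)) /\
    c 0 = x /\ c (d x y) = y /\
    (forall z, S z <-> exists t, 0 <= t <= d x y /\ z = c t).

Definition uniquely_geodesic {T : Type} (d : T -> T -> R) : Prop :=
  forall x y, exists S, geodesic_segment d x y S /\
    forall S', geodesic_segment d x y S' -> forall z, S' z <-> S z.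

Definition R_tree {T : Type} (d : T -> T -> R) : Prop :=
  metric T d /\ uniquely_geodesic d /\
  forall x y z (S1 S2 : T -> Prop),
    geodesic_segment d x y S1 -> geodesic_segment d y z S2 ->
    (forall w, (S1 w /\ S2 w) <-> w = y) ->
    geodesic_segment d x z (fun w => S1 w \/ S2 w).

Definition complete_metric {T : Type} (d : T -> T -> R) : Prop :=
  forall u : nat -> T,
    (forall eps, 0 < eps -> exists N, forall m n, (N <= m)%nat -> (N <= n)%nat ->
        d (u m) (u n) < eps) ->
    exists l, forall eps, 0 < eps -> exists N, forall n, (N <= n)%nat ->
        d (u n) l < eps.

Definition bounded_nonexp {B Y : Type} (dB : B -> B -> R) (dY : Y -> Y -> R)
  (f : B -> Y) : Prop :=
  (exists M, forall a b, dY (f a) (f b) <= M) /\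
  (forall a b, dY (f a) (f b) <= dB a b).

Definition d_sup {B Y : Type} (dY : Y -> Y -> R) (f g : B -> Y) : Rbar :=
  Lub_Rbar (fun r => exists a, r = dY (f a) (g a)).

Definition sub_dist {X : Type} (dX : X -> X -> R) (A : X -> Prop)
  (a b : {x : X | A x}) : R := dX (proj1_sig a) (proj1_sig b).

(* For a nonexpansive [f] on [A] and a point [x], the closed balls [B (f b, dX x b)] pairwise
   intersect; in a complete R-tree they have common points, and [alpha f x] is the one nearest
   to a fixed base point [y0].  Everything rests on the tree inequality
   [d (g s) z <= max (d x z - s, d y z - (d x y - s))] along a geodesic [g] from [x] to [y],
   obtained from the tripod spanned by [x], [y], [z].  It yields existence (a Cauchy sequence
   climbing along geodesics from [y0]) and the key estimate: nearest points of two ball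
   intersections, each lying in the [e]-enlargement of the other, are [e]-close.  Perturbing the
   radii by [dX x x'] makes [alpha f] nonexpansive; perturbing the centres from [f] to [g] by
   [d_sup f g] gives the selection estimate. *)

From Stdlib Require Import Reals Lra Lia Classical ClassicalEpsilon.
From Coquelicot Require Import Coquelicot.
Open Scope R_scope.

Set Implicit Arguments.
Unset Strict Implicit.

Definition geodesic {T : Type} (d : T -> T -> R) (x y : T) (g : R -> T) : Prop :=
  (forall s t, 0 <= s <= d x y -> 0 <= t <= d x y -> d (g s) (g t) = Rabs (s - t)) /\
  g 0 = x /\ g (d x y) = y.

Section MetricGeodesics.

Variables (T : Type) (d : T -> T -> R).
Hypothesis Hm : metric T d.

Lemma dist_xx x : d x x = 0.
Proof. exact (proj2 (metric_eq0 _ _ Hm x x) eq_refl). Qed.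

Lemma dist_ge0 x y : 0 <= d x y.
Proof.
  pose proof (metric_tri _ _ Hm x y x) as H.
  rewrite dist_xx, (metric_sym _ _ Hm y x) in H; lra.
Qed.

Lemma geodesic_dist_start x y g s :
  geodesic d x y g -> 0 <= s <= d x y -> d x (g s) = s.
Proof.
  intros [Hiso [Hg0 _]] Hs. rewrite <- Hg0, Hiso by (pose proof (dist_ge0 x y); lra).
  rewrite Rabs_left1; lra.
Qed.

Lemma geodesic_dist_end x y g s :
  geodesic d x y g -> 0 <= s <= d x y -> d (g s) y = d x y - s.
Proof.
  intros [Hiso [_ HgD]] Hs. rewrite <- HgD at 1. rewrite Hiso by lra.
  rewrite Rabs_left1; lra.
Qed.

Lemma geodesic_sub x y g a b : geodesic d x y g -> 0 <= a <= b -> b <= d x y ->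
  geodesic d (g a) (g b) (fun u => g (a + u)).
Proof.
  intros G Ha Hb. pose proof G as [Hiso _].
  assert (Dab : d (g a) (g b) = b - a) by (rewrite Hiso by lra; rewrite Rabs_left1; lra).
  unfold geodesic; rewrite Dab. split; [|split].
  - intros s t Hs Ht. rewrite Hiso by lra. f_equal. ring.
  - now rewrite Rplus_0_r.
  - f_equal. ring.
Qed.

Lemma geodesic_sub_rev x y g a b : geodesic d x y g -> 0 <= a <= b -> b <= d x y ->
  geodesic d (g b) (g a) (fun u => g (b - u)).
Proof.
  intros G Ha Hb. pose proof G as [Hiso _].
  assert (Dba : d (g b) (g a) = b - a) by (rewrite Hiso by lra; rewrite Rabs_right; lra).
  unfold geodesic; rewrite Dba. split; [|split].
  - intros s t Hs Ht. rewrite Hiso by lra.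
    replace (b - s - (b - t)) with (- (s - t)) by ring. apply Rabs_Ropp.
  - now rewrite Rminus_0_r.
  - f_equal. ring.
Qed.

Lemma geodesic_segment_image x y g : geodesic d x y g ->
  geodesic_segment d x y (fun z => exists t, 0 <= t <= d x y /\ z = g t).
Proof. intros [Hiso [Hg0 HgD]]. exists g. repeat split; auto; tauto. Qed.

(* The agreement set of two geodesics issued from [x] is closed, so it has a largest element. *)
Lemma geodesics_last_common_point x y z g1 g2 :
  geodesic d x y g1 -> geodesic d x z g2 ->
  exists t, 0 <= t <= d x y /\ t <= d x z /\ g1 t = g2 t /\
    forall s, 0 <= s <= d x y -> s <= d x z -> g1 s = g2 s -> s <= t.
Proof.
  intros [I1 [A1 _]] [I2 [A2 _]].
  set (E := fun s => 0 <= s <= d x y /\ s <= d x z /\ g1 s = g2 s).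
  assert (E0 : E 0).
  { pose proof (dist_ge0 x y); pose proof (dist_ge0 x z).
    unfold E; rewrite A1, A2; repeat split; lra. }
  destruct (completeness E) as [t [Hub Hle]].
  { exists (d x y). intros s Es. apply Es. }
  { now exists 0. }
  assert (t0 : 0 <= t) by now apply Hub.
  assert (t1 : t <= d x y) by (apply Hle; intros s Es; apply Es).
  assert (t2 : t <= d x z) by (apply Hle; intros s Es; apply Es).
  exists t; repeat split; try lra.
  - apply (metric_eq0 _ _ Hm). set (e := d (g1 t) (g2 t)).
    destruct (Req_dec e 0) as [|He]; [assumption|exfalso].
    assert (Hpos : 0 < e) by (pose proof (dist_ge0 (g1 t) (g2 t)); unfold e in *; lra).
    assert (Hnear : exists s, E s /\ t - e / 3 < s).
    { apply NNPP; intro Hn.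
      enough (t <= t - e / 3) by lra.
      apply Hle; intros s Es. apply Rnot_lt_le; intro Hs. apply Hn. now exists s. }
    destruct Hnear as [s [Es Hs]].
    assert (st : s <= t) by now apply Hub.
    destruct Es as [Hs1 [Hs2 Hs3]].
    pose proof (metric_tri _ _ Hm (g1 t) (g1 s) (g2 t)) as Htri.
    rewrite I1, Hs3, I2 in Htri by lra.
    rewrite Rabs_right, Rabs_left1 in Htri by lra. fold e in Htri. lra.
  - intros s Hs1 Hs2 Hs3. apply Hub. repeat split; lra || assumption.
Qed.

End MetricGeodesics.

Section RTree.

Variables (Y : Type) (d : Y -> Y -> R).
Hypothesis HT : R_tree d.

Let Hm : metric Y d := proj1 HT.

Lemma geodesic_exists x y : exists g, geodesic d x y g.
Proof.
  destruct (proj1 (proj2 HT) x y) as [S [[g [Hiso [Hg0 [HgD _]]]] _]].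
  now exists g.
Qed.

Lemma rtree_glue_dist y c z h1 h2 : geodesic d y c h1 -> geodesic d c z h2 ->
  (forall u v, 0 <= u <= d y c -> 0 <= v <= d c z -> h1 u = h2 v -> h2 v = c) ->
  d y z = d y c + d c z.
Proof.
  intros G1 G2 Hmeet.
  pose proof G1 as [_ [_ E1]]; pose proof G2 as [_ [E2 _]].
  pose proof (dist_ge0 Hm y c); pose proof (dist_ge0 Hm c z).
  destruct (proj2 (proj2 HT) y c z _ _
    (geodesic_segment_image G1) (geodesic_segment_image G2)) as [g [Hiso [Hg0 [HgD Himg]]]].
  - intro w; split.
    + intros [[u [Hu ->]] [v [Hv Huv]]]. rewrite Huv. now apply (Hmeet u v).
    + intros ->. split; [exists (d y c) | exists 0]; split; auto; lra.
  - assert (Hc : exists u, 0 <= u <= d y c /\ c = h1 u) by (exists (d y c); split; auto; lra).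
    destruct (proj1 (Himg c) (or_introl Hc)) as [t [Ht ->]].
    assert (G : geodesic d y z g) by (split; auto).
    rewrite (geodesic_dist_start Hm G Ht), (geodesic_dist_end G Ht). ring.
Qed.

(* Past the last common point of two geodesics from [x] the two branches meet only there,
   so the gluing axiom applies to them. *)
Lemma geodesics_tripod x y z g1 g2 : geodesic d x y g1 -> geodesic d x z g2 ->
  exists t, 0 <= t <= d x y /\ t <= d x z /\ g1 t = g2 t /\
    d y z = (d x y - t) + (d x z - t).
Proof.
  intros G1 G2.
  destruct (geodesics_last_common_point Hm G1 G2) as [t [Ht1 [Ht2 [Hc Hlast]]]].
  exists t; do 3 (split; [assumption|]).
  assert (R1 := geodesic_sub_rev G1 Ht1 (Rle_refl _)).
  assert (S2 := geodesic_sub G2 (conj (proj1 Ht1) Ht2) (Rle_refl _)).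
  pose proof G1 as [_ [_ B1]]; pose proof G2 as [_ [_ B2]].
  rewrite B1 in R1. rewrite B2, <- Hc in S2.
  assert (Dyc : d y (g1 t) = d x y - t).
  { rewrite (metric_sym _ _ Hm). now apply geodesic_dist_end. }
  assert (Dcz : d (g1 t) z = d x z - t).
  { rewrite Hc. now apply geodesic_dist_end. }
  rewrite <- Dyc, <- Dcz. apply (rtree_glue_dist R1 S2).
  rewrite Dyc, Dcz. intros u v Hu Hv Huv.
  assert (Hw : d x y - u = t + v).
  { rewrite <- (geodesic_dist_start Hm G1 (s := d x y - u)) by lra.
    rewrite Huv. apply (geodesic_dist_start Hm G2). lra. }
  assert (Hv0 : t + v <= t) by (apply Hlast; [lra | lra | rewrite <- Hw at 1; exact Huv]).
  replace v with 0 by lra. now rewrite Rplus_0_r.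
Qed.

Lemma geodesic_dist_le_max x y g z s : geodesic d x y g -> 0 <= s <= d x y ->
  d (g s) z <= Rmax (d x z - s) (d y z - (d x y - s)).
Proof.
  intros G Hs. destruct (geodesic_exists x z) as [g2 G2].
  destruct (geodesics_tripod G G2) as [t [Ht1 [Ht2 [Hc Hyz]]]].
  assert (Dcz : d (g t) z = d x z - t) by (rewrite Hc; now apply geodesic_dist_end).
  pose proof (metric_tri _ _ Hm (g s) (g t) z) as Htri.
  rewrite (proj1 G) in Htri by lra.
  apply Rmax_Rle. destruct (Rle_dec s t); [left | right].
  - rewrite Rabs_left1 in Htri; lra.
  - rewrite Rabs_right in Htri; lra.
Qed.

End RTree.

Definition in_balls {Y I : Type} (d : Y -> Y -> R) (c : I -> Y) (r : I -> R) (p : Y) :=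
  forall i, d p (c i) <= r i.

(* [d y0 p <= max (0, sup_i (d y0 (c i) - r i))], the least possible distance from [y0]
   to a common point of the balls. *)
Definition dist_le_excess {Y I : Type} (d : Y -> Y -> R) (y0 : Y) (c : I -> Y) (r : I -> R)
  (p : Y) :=
  forall B, 0 <= B -> (forall i, d y0 (c i) - r i <= B) -> d y0 p <= B.

Lemma dist_le_excess_min {Y I : Type} (d : Y -> Y -> R) (y0 : Y) (c : I -> Y) r p q :
  metric Y d -> dist_le_excess d y0 c r p -> in_balls d c r q -> d y0 p <= d y0 q.
Proof.
  intros Hm Hp Hq. apply Hp; [apply (dist_ge0 Hm)|].
  intro i. pose proof (metric_tri _ _ Hm y0 q (c i)). specialize (Hq i). lra.
Qed.

Lemma le_of_forall_lt_plus (a b : R) : (forall eps, 0 < eps -> a < b + eps) -> a <= b.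
Proof.
  intro H. apply Rnot_lt_le. intro Hba. specialize (H ((a - b) / 2)). lra.
Qed.

Lemma approx_from_below (T : R) : 0 < T -> exists sig : nat -> R,
  (forall n, 0 <= sig n < T) /\
  (forall eps, 0 < eps -> exists N, forall n, (N <= n)%nat -> T - sig n < eps).
Proof.
  intro HT. exists (fun n => T - T / (INR n + 1)). split.
  - intro n. pose proof (pos_INR n).
    assert (0 < T / (INR n + 1)) by (apply Rdiv_lt_0_compat; lra).
    enough (T / (INR n + 1) <= T) by lra.
    apply Rle_div_l; nra.
  - intros eps Heps. destruct (archimed_cor1 (eps / T)) as [N [HN N0]].
    { now apply Rdiv_lt_0_compat. }
    pose proof (lt_0_INR _ N0).
    assert (HTN : T < eps * INR N).
    { apply (Rmult_lt_compat_l (T * INR N)) in HN; [|nra].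
      replace (T * INR N * / INR N) with T in HN by (field; lra).
      replace (T * INR N * (eps / T)) with (eps * INR N) in HN by (field; lra).
      exact HN. }
    exists N. intros n Hn. pose proof (le_INR _ _ Hn).
    replace (T - (T - T / (INR n + 1))) with (T / (INR n + 1)) by ring.
    apply Rlt_div_l; nra.
Qed.

Lemma complete_controlled_limit {Y : Type} (d : Y -> Y -> R) (q : nat -> Y)
  (sig : nat -> R) (T : R) :
  complete_metric d -> (forall n m, d (q n) (q m) <= Rabs (sig n - sig m)) ->
  (forall n, sig n <= T) ->
  (forall eps, 0 < eps -> exists N, forall n, (N <= n)%nat -> T - sig n < eps) ->
  exists l, forall eps, 0 < eps -> exists N, forall n, (N <= n)%nat -> d (q n) l < eps.
Proof.
  intros Hc Hq Hsig Hlim. apply Hc. intros eps Heps.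
  destruct (Hlim eps Heps) as [N HN]. exists N. intros m n Hm Hn.
  eapply Rle_lt_trans; [apply Hq|].
  specialize (HN m Hm) as Hm'. specialize (HN n Hn). pose proof (Hsig m); pose proof (Hsig n).
  apply Rabs_def1; lra.
Qed.

Section NearestPoint.

Variables (Y I : Type) (d : Y -> Y -> R).
Hypothesis HT : R_tree d.

Let Hm : metric Y d := proj1 HT.

(* Nearest points to [y0] of two ball intersections, each lying in the other intersection
   enlarged by [e], are [e]-close: otherwise, the geodesic [g] from [p'] to [p] would contain
   points of both intersections closer to [y0] than [p] resp. [p']. *)
Lemma nearest_in_balls_close (y0 : Y) (c c' : I -> Y) (r r' : I -> R) (e : R) p p' :
  0 <= e -> in_balls d c r p -> in_balls d c' r' p' ->
  in_balls d c (fun i => r i + e) p' -> in_balls d c' (fun i => r' i + e) p ->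
  (forall q, in_balls d c r q -> d y0 p <= d y0 q) ->
  (forall q, in_balls d c' r' q -> d y0 p' <= d y0 q) ->
  d p p' <= e.
Proof.
  intros He Hp Hp' Hp'e Hpe Hmin Hmin'.
  rewrite (metric_sym _ _ Hm). apply Rnot_lt_le. intro HD.
  destruct (geodesic_exists HT p' p) as [g G].
  assert (Hin : forall s, e <= s <= d p' p -> in_balls d c r (g s)).
  { intros s Hs i. eapply Rle_trans; [apply (geodesic_dist_le_max HT _ G); lra|].
    apply Rmax_lub; specialize (Hp i); specialize (Hp'e i); lra. }
  assert (Hin' : forall s, 0 <= s <= d p' p - e -> in_balls d c' r' (g s)).
  { intros s Hs i. eapply Rle_trans; [apply (geodesic_dist_le_max HT _ G); lra|].
    apply Rmax_lub; specialize (Hp' i); specialize (Hpe i); lra. }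
  assert (Hy0 : forall s, 0 <= s <= d p' p ->
    d y0 (g s) <= d y0 p' - s \/ d y0 (g s) <= d y0 p - (d p' p - s)).
  { intros s Hs. rewrite (metric_sym _ _ Hm y0 (g s)), (metric_sym _ _ Hm y0 p'),
      (metric_sym _ _ Hm y0 p). apply Rmax_Rle, (geodesic_dist_le_max HT); [exact G|lra]. }
  set (s1 := (d p' p + e) / 2). set (s2 := (d p' p - e) / 2).
  pose proof (Hmin _ (Hin s1 ltac:(unfold s1; lra))) as H1.
  pose proof (Hmin' _ (Hin' s2 ltac:(unfold s2; lra))) as H2.
  destruct (Hy0 s1 ltac:(unfold s1; lra)) as [H3|H3];
  destruct (Hy0 s2 ltac:(unfold s2; lra)) as [H4|H4]; unfold s1, s2 in *; lra.
Qed.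

Variables (y0 : Y) (c : I -> Y) (r : I -> R).
Hypothesis Hr : forall i, 0 <= r i.
Hypothesis Hpair : forall i j, d (c i) (c j) <= r i + r j.

Lemma geodesic_point_in_enlarged_balls T i g s :
  (forall j, d y0 (c j) - r j <= T) -> geodesic d y0 (c i) g ->
  0 <= s <= d y0 (c i) - r i -> in_balls d c (fun j => r j + (T - s)) (g s).
Proof.
  intros HTub G Hs j. pose proof (Hr i); pose proof (HTub i); pose proof (HTub j).
  pose proof (Hpair i j).
  eapply Rle_trans; [apply (geodesic_dist_le_max HT _ G); lra|]. apply Rmax_lub; lra.
Qed.

Lemma geodesic_points_close i j g1 g2 s1 s2 :
  geodesic d y0 (c i) g1 -> geodesic d y0 (c j) g2 ->
  0 <= s1 <= d y0 (c i) - r i -> 0 <= s2 <= d y0 (c j) - r j ->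
  d (g1 s1) (g2 s2) <= Rabs (s1 - s2).
Proof.
  intros G1 G2 Hs1 Hs2. pose proof (Hr i); pose proof (Hr j); pose proof (Hpair i j).
  rewrite (metric_sym _ _ Hm).
  eapply Rle_trans; [apply (geodesic_dist_le_max HT _ G2); lra|].
  rewrite (geodesic_dist_start Hm G1) by lra.
  pose proof (Rle_abs (s1 - s2)); pose proof (Rle_abs (- (s1 - s2))); rewrite Rabs_Ropp in *.
  apply Rmax_lub; [lra|].
  assert (Hmax := geodesic_dist_le_max HT (c j) G1 (s := s1) ltac:(lra)).
  rewrite (metric_sym _ _ Hm). unfold Rmax in Hmax. destruct (Rle_dec _ _) in Hmax; lra.
Qed.

Lemma limit_in_balls_dist_le_excess (T : R) (sig : nat -> R) (q : nat -> Y) (l : Y) :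
  (forall B, (forall i, d y0 (c i) - r i <= B) -> T <= B) ->
  (forall n, sig n <= T) -> (forall n, d y0 (q n) = sig n) ->
  (forall n, in_balls d c (fun j => r j + (T - sig n)) (q n)) ->
  (forall eps, 0 < eps -> exists n, d (q n) l < eps /\ T - sig n < eps) ->
  in_balls d c r l /\ dist_le_excess d y0 c r l.
Proof.
  intros HTlub Hsig Hqy0 Hq Hnear. split.
  - intro j. apply le_of_forall_lt_plus. intros eps Heps.
    destruct (Hnear (eps / 2) ltac:(lra)) as [n [Hn1 Hn2]].
    pose proof (metric_tri _ _ Hm l (q n) (c j)) as Htri.
    rewrite (metric_sym _ _ Hm l (q n)) in Htri. specialize (Hq n j). simpl in Hq. lra.
  - intros B _ HB. pose proof (HTlub B HB). apply le_of_forall_lt_plus. intros eps Heps.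
    destruct (Hnear eps Heps) as [n [Hn1 Hn2]].
    pose proof (metric_tri _ _ Hm y0 (q n) l). specialize (Hqy0 n). specialize (Hsig n). lra.
Qed.

(* The sought point is the limit of points [q n] at distance [sig n] from [y0] towards
   centres [c i] whose excess [d y0 (c i) - r i] tends to its supremum [T]. *)
Lemma exists_in_balls_dist_le_excess (i0 : I) : complete_metric d ->
  (exists B, forall i, d y0 (c i) - r i <= B) ->
  exists p, in_balls d c r p /\ dist_le_excess d y0 c r p.
Proof.
  intros Hc [B0 HB0].
  destruct (completeness (fun s => exists i, s = d y0 (c i) - r i)) as [T [Hub Hlub]].
  { exists B0. intros s [i ->]. apply HB0. }
  { now exists (d y0 (c i0) - r i0), i0. }
  assert (HTub : forall i, d y0 (c i) - r i <= T) by (intro i; apply Hub; now exists i).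
  assert (HTlub : forall B, (forall i, d y0 (c i) - r i <= B) -> T <= B).
  { intros B HB. apply Hlub. intros s [i ->]. apply HB. }
  destruct (Rle_dec T 0) as [HT0|HT0].
  { exists y0. split.
    - intro i. specialize (HTub i). lra.
    - intros B HB _. now rewrite (dist_xx Hm). }
  destruct (approx_from_below (Rnot_le_lt _ _ HT0)) as [sig [Hsig Hlim]].
  assert (Hpick : forall n, exists ig : I * (R -> Y),
    geodesic d y0 (c (fst ig)) (snd ig) /\ sig n <= d y0 (c (fst ig)) - r (fst ig)).
  { intro n. assert (Hi : exists i, sig n <= d y0 (c i) - r i).
    { apply NNPP. intro Hno. enough (T <= sig n) by (specialize (Hsig n); lra).
      apply HTlub. intro i. apply Rnot_lt_le. intro Hi. apply Hno. exists i. lra. }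
    destruct Hi as [i Hi]. destruct (geodesic_exists HT y0 (c i)) as [g G].
    now exists (i, g). }
  destruct (choice _ Hpick) as [u Hu].
  assert (Hs : forall n, 0 <= sig n <= d y0 (c (fst (u n))) - r (fst (u n)))
    by (intro n; specialize (Hsig n); specialize (Hu n); lra).
  destruct (complete_controlled_limit (q := fun n => snd (u n) (sig n)) (sig := sig) (T := T) Hc)
    as [l Hl]; [| intro n; specialize (Hsig n); lra | exact Hlim |].
  { intros n m. apply (geodesic_points_close (proj1 (Hu n)) (proj1 (Hu m))); apply Hs. }
  exists l.
  apply (limit_in_balls_dist_le_excess HTlub (sig := sig) (q := fun n => snd (u n) (sig n))).
  - intro n. specialize (Hsig n). lra.
  - intro n. apply (geodesic_dist_start Hm (proj1 (Hu n))).
    specialize (Hs n); pose proof (Hr (fst (u n))); lra.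
  - intro n. exact (geodesic_point_in_enlarged_balls HTub (proj1 (Hu n)) (Hs n)).
  - intros eps Heps. destruct (Hl eps Heps) as [N1 HN1]. destruct (Hlim eps Heps) as [N2 HN2].
    exists (Nat.max N1 N2). split; [apply HN1 | apply HN2]; lia.
Qed.

End NearestPoint.

Lemma d_sup_ge {B Y : Type} (dY : Y -> Y -> R) (f g : B -> Y) (b : B) :
  Rbar_le (dY (f b) (g b)) (d_sup dY f g).
Proof. apply (proj1 (Lub_Rbar_correct _)). now exists b. Qed.

Lemma d_sup_le {B Y : Type} (dY : Y -> Y -> R) (f g : B -> Y) (M : Rbar) :
  (forall b, Rbar_le (dY (f b) (g b)) M) -> Rbar_le (d_sup dY f g) M.
Proof. intro HM. apply (proj2 (Lub_Rbar_correct _)). now intros r [b ->]. Qed.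

Section NearestExtension.

Variables (X Y : Type) (dX : X -> X -> R) (A : X -> Prop) (dY : Y -> Y -> R).
Hypothesis HX : metric X dX.
Hypothesis HT : R_tree dY.
Variable y0 : Y.

Let HY : metric Y dY := proj1 HT.

Definition nearest_extension (alpha : ({x : X | A x} -> Y) -> X -> Y) : Prop :=
  forall f, bounded_nonexp (sub_dist dX A) dY f -> forall x,
    in_balls dY f (fun b => dX x (proj1_sig b)) (alpha f x) /\
    dist_le_excess dY y0 f (fun b => dX x (proj1_sig b)) (alpha f x).

Lemma nearest_extension_exists (a0 : {x : X | A x}) :
  complete_metric dY -> exists alpha, nearest_extension alpha.
Proof.
  intro Hc.
  assert (Hpt : forall f x, exists p, bounded_nonexp (sub_dist dX A) dY f ->
    in_balls dY f (fun b => dX x (proj1_sig b)) p /\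
    dist_le_excess dY y0 f (fun b => dX x (proj1_sig b)) p).
  { intros f x. destruct (classic (bounded_nonexp (sub_dist dX A) dY f))
      as [[[M HM] Hne] | Hf]; [|now exists y0].
    assert (Hpair : forall i j, dY (f i) (f j) <= dX x (proj1_sig i) + dX x (proj1_sig j)).
    { intros i j. eapply Rle_trans; [apply Hne|]. unfold sub_dist.
      rewrite (metric_sym _ _ HX x (proj1_sig i)). apply (metric_tri _ _ HX). }
    assert (Hexcess : exists B, forall i, dY y0 (f i) - dX x (proj1_sig i) <= B).
    { exists (dY y0 (f a0) + M). intro i.
      pose proof (metric_tri _ _ HY y0 (f a0) (f i)). pose proof (HM a0 i).
      pose proof (dist_ge0 HX x (proj1_sig i)). lra. }
    destruct (exists_in_balls_dist_le_excess HT (y0 := y0)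
      (fun b => dist_ge0 HX x (proj1_sig b)) Hpair a0 Hc Hexcess) as [p Hp].
    now exists p. }
  destruct (choice _ (fun f => choice _ (Hpt f))) as [alpha Halpha].
  exists alpha. intros f Hf x. exact (Halpha f x Hf).
Qed.

Variable alpha : ({x : X | A x} -> Y) -> X -> Y.
Hypothesis Halpha : nearest_extension alpha.
Variable f : {x : X | A x} -> Y.
Hypothesis Hf : bounded_nonexp (sub_dist dX A) dY f.

Lemma nearest_extension_min x q : in_balls dY f (fun b => dX x (proj1_sig b)) q ->
  dY y0 (alpha f x) <= dY y0 q.
Proof. apply (dist_le_excess_min HY), (Halpha Hf). Qed.

Lemma nearest_extension_restrict (a : {x : X | A x}) : alpha f (proj1_sig a) = f a.
Proof.
  pose proof (proj1 (Halpha Hf (proj1_sig a)) a) as Ha. simpl in Ha.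
  rewrite (dist_xx HX) in Ha. apply (metric_eq0 _ _ HY).
  pose proof (dist_ge0 HY (alpha f (proj1_sig a)) (f a)). lra.
Qed.

Lemma nearest_extension_nonexp x x' : dY (alpha f x) (alpha f x') <= dX x x'.
Proof.
  apply (nearest_in_balls_close HT (y0 := y0) (c := f) (c' := f)
    (r := fun b => dX x (proj1_sig b)) (r' := fun b => dX x' (proj1_sig b)) (dist_ge0 HX x x'));
    [apply (Halpha Hf) | apply (Halpha Hf) | | | apply nearest_extension_min ..].
  - intro i. pose proof (proj1 (Halpha Hf x') i). simpl in *.
    pose proof (metric_tri _ _ HX x' x (proj1_sig i)).
    rewrite (metric_sym _ _ HX x' x) in *. lra.
  - intro i. pose proof (proj1 (Halpha Hf x) i). simpl in *.
    pose proof (metric_tri _ _ HX x x' (proj1_sig i)). lra.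
Qed.

Lemma nearest_extension_bounded (a0 : {x : X | A x}) :
  exists M, forall x x', dY (alpha f x) (alpha f x') <= M.
Proof.
  destruct Hf as [[M HM] _]. set (B := Rabs (dY y0 (f a0) + M)).
  assert (HB : forall x, dY y0 (alpha f x) <= B).
  { intro x. apply (proj2 (Halpha Hf x)); [apply Rabs_pos|].
    intro b. pose proof (metric_tri _ _ HY y0 (f a0) (f b)). pose proof (HM a0 b).
    pose proof (dist_ge0 HX x (proj1_sig b)). pose proof (Rle_abs (dY y0 (f a0) + M)).
    unfold B. lra. }
  exists (2 * B). intros x x'.
  pose proof (metric_tri _ _ HY (alpha f x) y0 (alpha f x')).
  rewrite (metric_sym _ _ HY (alpha f x) y0) in *. pose proof (HB x). pose proof (HB x'). lra.
Qed.

Lemma nearest_extension_d_sup (a0 : {x : X | A x}) g :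
  bounded_nonexp (sub_dist dX A) dY g ->
  Rbar_le (d_sup dY (alpha f) (alpha g)) (d_sup dY f g).
Proof.
  intro Hg. apply d_sup_le. intro x.
  assert (HD := d_sup_ge dY f g).
  destruct (d_sup dY f g) as [e| |]; simpl in *; [|trivial|exact (HD a0)].
  pose proof (dist_ge0 HY (f a0) (g a0)). pose proof (HD a0).
  apply (nearest_in_balls_close HT (y0 := y0) (c := f) (c' := g) (e := e)
    (r := fun b => dX x (proj1_sig b)) (r' := fun b => dX x (proj1_sig b)));
    [lra | apply (Halpha Hf) | apply (Halpha Hg) | | | apply nearest_extension_min |].
  - intro i. pose proof (proj1 (Halpha Hg x) i). simpl in *.
    pose proof (metric_tri _ _ HY (alpha g x) (g i) (f i)).
    rewrite (metric_sym _ _ HY (g i) (f i)) in *. pose proof (HD i). lra.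
  - intro i. pose proof (proj1 (Halpha Hf x) i). simpl in *.
    pose proof (metric_tri _ _ HY (alpha f x) (f i) (g i)). pose proof (HD i). lra.
  - intros q Hq. apply (dist_le_excess_min HY (proj2 (Halpha Hg x)) Hq).
Qed.

End NearestExtension.

Theorem corollary5p9 (X : Type) (dX : X -> X -> R) (A : X -> Prop)
  (Y : Type) (dY : Y -> Y -> R) :
  metric X dX -> (exists a, A a) -> R_tree dY -> complete_metric dY ->
  exists alpha : ({x : X | A x} -> Y) -> (X -> Y),
    (forall f, bounded_nonexp (sub_dist dX A) dY f ->
       bounded_nonexp dX dY (alpha f) /\
       (forall a : {x : X | A x}, alpha f (proj1_sig a) = f a)) /\
    (forall f g, bounded_nonexp (sub_dist dX A) dY f ->
       bounded_nonexp (sub_dist dX A) dY g ->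
       Rbar_le (d_sup dY (alpha f) (alpha g)) (d_sup dY f g)).
Proof.
  intros HX [x0 Hx0] HT Hc. set (a0 := exist A x0 Hx0).
  destruct (classic (inhabited Y)) as [[y0] | HnY].
  2:{ exists (fun f _ => f a0). split; intro f; exfalso; exact (HnY (inhabits (f a0))). }
  destruct (nearest_extension_exists HX HT y0 a0 Hc) as [alpha Halpha].
  exists alpha. split.
  - intros f Hf. split; [split|].
    + exact (nearest_extension_bounded HX HT Halpha Hf a0).
    + exact (nearest_extension_nonexp HX HT Halpha Hf).
    + exact (nearest_extension_restrict HX HT Halpha Hf).
  - intros f g Hf Hg. exact (nearest_extension_d_sup HT Halpha Hf a0 Hg).
Qed.
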